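(* Let $k$ be a field of characteristic $p>2$ ($p$ prime). Let $m\ge1$ and $u_1,u_2,\ldots,u_{2m},v\in k_1\langle X\rangle$. Then for any $i$ with $1\le i\le 2m$, $$w_m(u_1,\ldots,u_i+v,\ldots,u_{2m})\equiv w_m(u_1,\ldots,u_i,\ldots,u_{2m})+w_m(u_1,\ldots,v,\ldots,u_{2m})\pmod{S^2+T^{(3)}},$$ where in the last term $v$ occupies the $i$-th argument.
   Context: $X=\{x_i\mid i\ge0\}$ is countably infinite; $k_1\langle X\rangle$ is the free unitary associative $k$-algebra on $X$. $[a,b]=ab-ba$, $[a,b,c]=[[a,b],c]$. A $T$-space is a linear subspace invariant under all endomorphisms of $k_1\langle X\rangle$; a $T$-ideal is a $T$-space that is an ideal. $T^{(3)}$ is the $T$-ideal generated by $[x_1,x_2,x_3]$, and $S^2$ is the $T$-space generated by $[x_1,x_2]$. $\kappa(u,v)=[u,v]u^{p-1}v^{p-1}$, $w_m=\prod_{r=1}^m\kappa(x_{2r-1},x_{2r})$, and $w_m(u_1,\ldots,u_{2m})$ denotes the image of $w_m$ under the endomorphism sending $x_j\mapsto u_j$ for $1\le j\le 2m$. *)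

From HB Require Import structures.
From mathcomp Require Import all_boot all_order all_algebra.
From mathcomp Require Import finmap.
From mathcomp.multinomials Require Import monalg.
Set Implicit Arguments. Unset Strict Implicit. Unset Printing Implicit Defensive.
Import GRing.Theory.
Local Open Scope ring_scope.

(* The free unitary associative k-algebra k_1<X> on X = {x_i | i >= 0}:
   the monoid algebra of the free monoid on nat (words = {fmonom nat}). *)
Definition FreeAlg (k : fieldType) := {malg k[{fmonom nat}]}.

Definition xvar (k : fieldType) (i : nat) : FreeAlg k := << fmu i >>.

Definition comm (R : ringType) (a b : R) : R := a * b - b * a.

Section Tnotions.
Variable k : fieldType.
Local Notation A := (FreeAlg k).

Definition is_subspace (V : A -> Prop) : Prop :=
  [/\ V 0, (forall a b, V a -> V b -> V (a + b)) &
      (forall (c : k) a, V a -> V (c *: a))].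

Definition endo_invariant (V : A -> Prop) : Prop :=
  forall (phi : {lrmorphism A -> A}) (a : A), V a -> V (phi a).

Definition is_Tspace (V : A -> Prop) : Prop := is_subspace V /\ endo_invariant V.

Definition is_ideal (V : A -> Prop) : Prop :=
  forall a b : A, V b -> V (a * b) /\ V (b * a).

Definition is_Tideal (V : A -> Prop) : Prop := is_Tspace V /\ is_ideal V.

Definition Tspace_gen (G : A -> Prop) (f : A) : Prop :=
  forall V, is_Tspace V -> (forall g, G g -> V g) -> V f.

Definition Tideal_gen (G : A -> Prop) (f : A) : Prop :=
  forall V, is_Tideal V -> (forall g, G g -> V g) -> V f.

Definition T3 : A -> Prop :=
  Tideal_gen (fun g => g = comm (comm (xvar k 1) (xvar k 2)) (xvar k 3)).

Definition S2 : A -> Prop :=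
  Tspace_gen (fun g => g = comm (xvar k 1) (xvar k 2)).

Definition S2_plus_T3 (f : A) : Prop :=
  exists a b, S2 a /\ T3 b /\ f = a + b.

Definition kappa (p : nat) (u v : A) : A :=
  comm u v * u ^+ p.-1 * v ^+ p.-1.

(* w_m(u_1,...,u_2m) = prod_{r=1}^m kappa(u_{2r-1}, u_{2r})
   (the image of w_m under x_j |-> u_j); u : nat -> A gives u_j = u j. *)
Definition wm (p m : nat) (u : nat -> A) : A :=
  \prod_(r < m) kappa p (u (2 * r).+1) (u (2 * r).+2).

End Tnotions.

(* Modulo T^(3) every commutator is central and [x,y][x,z] = [[x,y*x],z] - [[x,y],z]x
   vanishes, so each factor k(u,v) = [u,v] u^(p-1) v^(p-1) of w_m is central, and in a
   product with [a,w] or [b,w] the elements a and b commute.  With q = p - 1 and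
   [x^n, w] = n [x,w] x^(n-1), this gives
     k(a+b,w) - k(a,w) - k(b,w) = ([a,w]((a+b)^q - a^q) + [b,w]((a+b)^q - b^q)) w^q
                                = [f w^q, w],
   where f = sum_(0<j<p) (C(p,j)/p) a^(p-j) b^j; symmetrically in the second slot,
   using k(v,u) = -k(u,v).  The remaining factors P, Q of w_m being central,
   P [Y, w] Q = [P Y Q, w], so the defect of w_m is a commutator modulo T^(3), hence
   lies in S^2 + T^(3). *)

From HB Require Import structures.
From mathcomp Require Import all_boot all_order all_algebra.
From mathcomp Require Import zify.
From mathcomp.multinomials Require Import monalg.
Set Implicit Arguments. Unset Strict Implicit.
Import GRing.Theory.
Local Open Scope ring_scope.

Section Commutator.
Variable R : nzRingType.
Implicit Types x y z : R.

Lemma comm_antisym x y : comm y x = - comm x y.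
Proof. by rewrite /comm opprB. Qed.

Lemma commrr x : comm x x = 0.
Proof. by rewrite /comm subrr. Qed.

Lemma comm0l x : comm 0 x = 0.
Proof. by rewrite /comm mul0r mulr0 subrr. Qed.

Lemma comm1l x : comm 1 x = 0.
Proof. by rewrite /comm mul1r mulr1 subrr. Qed.

Lemma commDl x y z : comm (x + y) z = comm x z + comm y z.
Proof. by rewrite /comm mulrDl mulrDr opprD addrACA. Qed.

Lemma commMnl x y n : comm (x *+ n) y = comm x y *+ n.
Proof. by rewrite /comm mulrnAl mulrnAr mulrnBl. Qed.

Lemma comm_suml (J : Type) (r : seq J) (F : J -> R) y :
  comm (\sum_(j <- r) F j) y = \sum_(j <- r) comm (F j) y.
Proof.
elim: r => [|a r IH]; first by rewrite !big_nil comm0l.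
by rewrite !big_cons commDl IH.
Qed.

Lemma commMl x y z : comm (x * y) z = x * comm y z + comm x z * y.
Proof.
rewrite /comm mulrBr mulrBl !mulrA addrA; congr (_ + _).
by rewrite -!mulrA subrK.
Qed.

Lemma commMr x y z : comm x (y * z) = comm x y * z + y * comm x z.
Proof.
rewrite /comm mulrBr mulrBl !mulrA addrA; congr (_ - _).
by rewrite subrK.
Qed.

Lemma comm_mulr_expr x y n : comm (x * y ^+ n) y = comm x y * y ^+ n.
Proof. by rewrite commMl /comm -exprS -exprSr subrr mulr0 add0r. Qed.

End Commutator.

Lemma comm_rmorph (R S : nzRingType) (f : {rmorphism R -> S}) (x y : R) :
  f (comm x y) = comm (f x) (f y).
Proof. by rewrite /comm rmorphB !rmorphM. Qed.

Record ideal_pred (R : nzRingType) (I : R -> Prop) : Prop := IdealPred {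
  idealp0 : I 0;
  idealpB : forall x y, I x -> I y -> I (x - y);
  idealpMl : forall x y, I y -> I (x * y);
  idealpMr : forall x y, I x -> I (x * y) }.

Definition eqmod (R : nzRingType) (I : R -> Prop) (x y : R) := I (x - y).

Notation "x ≡ y 'mod' I" := (eqmod I x y) (at level 70, y at next level).

Section IdealPred.
Variables (R : nzRingType) (I : R -> Prop).
Hypothesis idI : ideal_pred I.
Implicit Types x y z t : R.

Lemma idealpN x : I x -> I (- x).
Proof. by move=> Ix; rewrite -sub0r; apply: idealpB => //; apply: idealp0. Qed.

Lemma idealpD x y : I x -> I y -> I (x + y).
Proof. by move=> Ix Iy; rewrite -[y]opprK; apply: idealpB => //; apply: idealpN. Qed.

Lemma idealpMn x n : I x -> I (x *+ n).
Proof.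
move=> Ix; elim: n => [|n IH]; first by rewrite mulr0n; apply: idealp0.
by rewrite mulrS; apply: idealpD.
Qed.

Lemma idealp_sum (J : Type) (r : seq J) (F : J -> R) :
  (forall j, I (F j)) -> I (\sum_(j <- r) F j).
Proof.
move=> IF; elim: r => [|a r IH]; first by rewrite big_nil; apply: idealp0.
by rewrite big_cons; apply: idealpD.
Qed.

Lemma idealp_commM x y z : I (comm x z) -> I (comm y z) -> I (comm (x * y) z).
Proof. by move=> Ix Iy; rewrite commMl; apply: idealpD; [apply: idealpMl|apply: idealpMr]. Qed.

Lemma idealp_commX x y n : I (comm x y) -> I (comm (x ^+ n) y).
Proof.
move=> Ix; elim: n => [|n IH]; first by rewrite expr0 comm1l; apply: idealp0.
by rewrite exprS; apply: idealp_commM.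
Qed.

Lemma eqmod_refl x : x ≡ x mod I.
Proof. by rewrite /eqmod subrr; apply: idealp0. Qed.

Lemma eqmod_eq x y : x = y -> x ≡ y mod I.
Proof. by move=> ->; apply: eqmod_refl. Qed.

Lemma eqmod_sym x y : x ≡ y mod I -> y ≡ x mod I.
Proof. by move=> Ixy; rewrite /eqmod -opprB; apply: idealpN. Qed.

Lemma eqmod_trans y x z : x ≡ y mod I -> y ≡ z mod I -> x ≡ z mod I.
Proof.
by move=> Ixy Iyz; rewrite /eqmod -[x](subrK y) -addrA; apply: idealpD.
Qed.

Lemma eqmodD x y z t : x ≡ y mod I -> z ≡ t mod I -> x + z ≡ y + t mod I.
Proof. by move=> Ixy Izt; rewrite /eqmod opprD addrACA; apply: idealpD. Qed.

Lemma eqmodN x y : x ≡ y mod I -> - x ≡ - y mod I.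
Proof. by move=> Ixy; rewrite /eqmod -opprD; apply: idealpN. Qed.

Lemma eqmodB x y z t : x ≡ y mod I -> z ≡ t mod I -> x - z ≡ y - t mod I.
Proof. by move=> Ixy Izt; apply: eqmodD => //; apply: eqmodN. Qed.

Lemma eqmodMl x y z : x ≡ y mod I -> z * x ≡ z * y mod I.
Proof. by move=> Ixy; rewrite /eqmod -mulrBr; apply: idealpMl. Qed.

Lemma eqmodMr x y z : x ≡ y mod I -> x * z ≡ y * z mod I.
Proof. by move=> Ixy; rewrite /eqmod -mulrBl; apply: idealpMr. Qed.

Lemma eqmodMn x y n : x ≡ y mod I -> x *+ n ≡ y *+ n mod I.
Proof. by move=> Ixy; rewrite /eqmod -mulrnBl; apply: idealpMn. Qed.

Lemma eqmod_sum (J : Type) (r : seq J) (F G : J -> R) :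
  (forall j, F j ≡ G j mod I) -> \sum_(j <- r) F j ≡ \sum_(j <- r) G j mod I.
Proof. by move=> IFG; rewrite /eqmod -sumrB; apply: idealp_sum. Qed.

End IdealPred.

Section BinomialMod.
Variables (R : nzRingType) (J : R -> Prop) (a b : R).
Hypotheses (idJ : ideal_pred J) (Jab : J (comm a b)).

Definition binom_sum n := \sum_(i < n.+1) (a ^+ (n - i) * b ^+ i) *+ 'C(n, i).

Lemma binom_sum_pascal n :
  \sum_(i < n.+1) (a ^+ (n.+1 - i) * b ^+ i) *+ 'C(n, i)
  + \sum_(i < n.+1) (a ^+ (n - i) * b ^+ i.+1) *+ 'C(n, i) = binom_sum n.+1.
Proof.
rewrite /binom_sum big_ord_recl [RHS]big_ord_recl -addrA; congr (_ + _).
  by rewrite !bin0.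
rewrite [in RHS](eq_bigr (fun i : 'I_n.+1 =>
    (a ^+ (n - i) * b ^+ i.+1) *+ 'C(n, i.+1)
  + (a ^+ (n - i) * b ^+ i.+1) *+ 'C(n, i))); last first.
  by move=> i _; rewrite binS mulrnDr.
rewrite big_split /=; congr (_ + _).
by rewrite big_ord_recr /= bin_small // mulr0n addr0; apply: eq_bigr => i _.
Qed.

Lemma mulD_binom_sum n : (a + b) * binom_sum n
  = binom_sum n.+1 + \sum_(i < n.+1) (comm b (a ^+ (n - i)) * b ^+ i) *+ 'C(n, i).
Proof.
rewrite -binom_sum_pascal /binom_sum mulrDl !big_distrr /= -addrA; congr (_ + _).
  by apply: eq_bigr => i _; rewrite mulrnAr mulrA -exprS subSn // -ltnS.
rewrite -big_split /=; apply: eq_bigr => i _.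
rewrite mulrnAr -mulrnDl; congr (_ *+ _).
by rewrite /comm mulrBl exprS !mulrA addrC subrK.
Qed.

Lemma binom_sum_subl q : binom_sum q - a ^+ q
  = \sum_(i < q) (a ^+ (q - i.+1) * b ^+ i.+1) *+ 'C(q, i.+1).
Proof. by rewrite /binom_sum big_ord_recl subn0 expr0 mulr1 bin0 mulr1n addrAC subrr add0r. Qed.

Lemma binom_sum_subr q : binom_sum q - b ^+ q
  = \sum_(i < q) (a ^+ (q - i) * b ^+ i) *+ 'C(q, i).
Proof. by rewrite /binom_sum big_ord_recr /= subnn expr0 mul1r binn mulr1n addrK. Qed.

Lemma exprD_binom_mod n : (a + b) ^+ n ≡ binom_sum n mod J.
Proof.
elim: n => [|n IH].
  by apply: (eqmod_eq idJ); rewrite /binom_sum big_ord_recl big_ord0 !expr0 mulr1 addr0.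
have Jba k : J (comm b (a ^+ k)).
  by rewrite comm_antisym; apply: idealpN => //; apply: idealp_commX.
rewrite /eqmod exprS.
have -> : (a + b) * (a + b) ^+ n - binom_sum n.+1 = (a + b) * ((a + b) ^+ n - binom_sum n)
   + \sum_(i < n.+1) (comm b (a ^+ (n - i)) * b ^+ i) *+ 'C(n, i).
  by rewrite mulrBr mulD_binom_sum opprD !addrA subrK.
apply: idealpD => //; first exact: idealpMl.
by apply: idealp_sum => // i; apply: idealpMn => //; apply: idealpMr.
Qed.

End BinomialMod.

Section CentralMod.
Variables (R : nzRingType) (I : R -> Prop).
Hypotheses (idI : ideal_pred I) (I3 : forall x y z, I (comm (comm x y) z)).
Implicit Types x y z w c : R.

Definition central_mod c := forall y, I (comm c y).

Lemma central_mod_comm x y : central_mod (comm x y).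
Proof. by move=> z; apply: I3. Qed.

Lemma central_mod_prod (J : Type) (r : seq J) (F : J -> R) :
  (forall j, central_mod (F j)) -> central_mod (\prod_(j <- r) F j).
Proof.
move=> CF y; elim: r => [|j r IH]; first by rewrite big_nil comm1l; exact: (idealp0 idI).
by rewrite big_cons; exact: (idealp_commM idI (CF j y) IH).
Qed.

Lemma central_mod_ideal c : central_mod c -> ideal_pred (fun z => I (c * z)).
Proof.
move=> Cc; split=> [|x y Ix Iy|x y Iy|x y Ix]; first by rewrite mulr0; exact: (idealp0 idI).
- by rewrite mulrBr; apply: idealpB.
- have -> : c * (x * y) = comm c x * y + x * (c * y) by rewrite /comm mulrBl !mulrA subrK.
  by apply: idealpD => //; [apply: idealpMr | apply: idealpMl].
- by rewrite mulrA; apply: idealpMr.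
Qed.

Lemma comm_mul_comm x y z : I (comm x y * comm x z).
Proof.
have -> : comm x y * comm x z = comm (comm x (y * x)) z - comm (comm x y) z * x.
  have -> : comm x (y * x) = comm x y * x by rewrite commMr commrr mulr0 addr0.
  by rewrite commMl addrK.
by apply: idealpB => //; apply: idealpMr.
Qed.

Lemma comm_mul_comm_r x y z : I (comm x y * comm y z).
Proof.
by rewrite comm_antisym mulNr; apply: idealpN => //; apply: comm_mul_comm.
Qed.

Lemma comm_expS x w n : comm (x ^+ n.+1) w ≡ (comm x w * x ^+ n) *+ n.+1 mod I.
Proof.
elim: n => [|n IH]; first by apply: (eqmod_eq idI); rewrite expr1 expr0 mulr1.
rewrite [x ^+ n.+2]exprS commMl [in X in _ ≡ X mod _]mulrSr.
apply: (eqmodD idI) => //; last exact: eqmod_refl.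
apply: (eqmod_trans idI (eqmodMl idI x IH)); rewrite mulrnAr; apply: (eqmodMn idI) => //.
rewrite mulrA [x ^+ n.+1]exprS mulrA; apply: (eqmodMr idI) => //.
by apply: (eqmod_sym idI) => //; apply: central_mod_comm.
Qed.

Lemma mul_exprD_binom_mod c a b n :
  central_mod c -> I (c * comm a b) ->
  c * (a + b) ^+ n ≡ c * binom_sum a b n mod I.
Proof.
move=> Cc Iab; rewrite /eqmod -mulrBr.
exact: (exprD_binom_mod (central_mod_ideal Cc) Iab n).
Qed.

Lemma comm_sandwich P Q X w : central_mod P -> central_mod Q ->
  comm (P * X * Q) w ≡ P * comm X w * Q mod I.
Proof.
move=> CP CQ; rewrite commMl commMl /eqmod mulrDl -addrA addrAC subrr add0r.
apply: (idealpD idI); first exact: (idealpMl idI _ (CQ w)).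
exact: (idealpMr idI _ (idealpMr idI _ (CP w))).
Qed.

End CentralMod.

Definition binom_quot (q i : nat) := ('C(q.+1, i.+1) %/ q.+1)%N.

Section BinomQuot.
Variable q : nat.
Hypothesis q1_prime : prime q.+1.

Lemma binom_quotK i : (i < q)%N -> (binom_quot q i * q.+1 = 'C(q.+1, i.+1))%N.
Proof. by move=> lt_iq; rewrite divnK // prime_dvd_bin. Qed.

Lemma mul_binom_quot_diag i : (i < q)%N -> (i.+1 * binom_quot q i = 'C(q, i))%N.
Proof.
move=> lt_iq; apply/eqP; rewrite -(eqn_pmul2r (ltn0Sn q)) -mulnA binom_quotK //.
by rewrite -mul_bin_diag mulnC.
Qed.

Lemma mul_binom_quot_down i : (i < q)%N -> ((q - i) * binom_quot q i = 'C(q, i.+1))%N.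
Proof.
move=> lt_iq; apply/eqP; rewrite -(eqn_pmul2r (ltn0Sn q)) -mulnA binom_quotK //.
by rewrite -subSS -mul_bin_down mulnC.
Qed.

End BinomQuot.

Definition kappaR (R : nzRingType) (n : nat) (s t : R) := comm s t * s ^+ n * t ^+ n.

(* ((a+b)^(q+1) - a^(q+1) - b^(q+1)) / (q+1) as a commutative polynomial, a's to the left *)
Definition frob_defect (R : nzRingType) (q : nat) (a b : R) :=
  \sum_(i < q) (a ^+ (q - i) * b ^+ i.+1) *+ binom_quot q i.

Section KappaMod.
Variables (R : nzRingType) (I : R -> Prop).
Hypotheses (idI : ideal_pred I) (I3 : forall x y z, I (comm (comm x y) z)).

Let comm_ideal s t := central_mod_ideal idI (central_mod_comm I3 s t).

Lemma kappaR_central_mod n s t : central_mod I (kappaR n s t).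
Proof.
(* z |-> I ([s,t] z) is an ideal containing [s,y] and [t,y]. *)
move=> y; rewrite /kappaR -mulrA commMl.
apply: (idealpD idI); last exact: (idealpMr idI _ (I3 _ _ _)).
apply: (idealp_commM (comm_ideal s t)); apply: (idealp_commX (comm_ideal s t)).
  exact: (comm_mul_comm idI I3).
exact: (comm_mul_comm_r idI I3).
Qed.

Lemma kappaR_antisym n s t : kappaR n t s ≡ - kappaR n s t mod I.
Proof.
have Jts : I (comm s t * comm t s).
  by rewrite (comm_antisym s t) mulrN; apply: (idealpN idI); exact: (comm_mul_comm idI I3).
have Jtn_s : I (comm s t * comm (t ^+ n) s) := idealp_commX (comm_ideal s t) n Jts.
have Js_tn : I (comm s t * comm s (t ^+ n)).
  by rewrite (comm_antisym (t ^+ n) s) mulrN; apply: (idealpN idI).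
rewrite /eqmod opprK /kappaR (comm_antisym s t) !mulNr addrC -!mulrA -mulrBr.
exact: (idealp_commX (comm_ideal s t) n Js_tn).
Qed.

Variable q : nat.
Hypothesis q1_prime : prime q.+1.
Implicit Types a b w : R.

Lemma comm_frob_defect_sum a b w : comm (frob_defect q a b) w ≡
  \sum_(i < q) ((comm a w * (a ^+ (q - i.+1) * b ^+ i.+1)) *+ 'C(q, i.+1)
               + (comm b w * (a ^+ (q - i) * b ^+ i)) *+ 'C(q, i)) mod I.
Proof.
rewrite /frob_defect comm_suml; apply: (eqmod_sum idI) => i.
rewrite commMnl commMl mulrnDl addrC; apply: (eqmodD idI).
  rewrite -(mul_binom_quot_down q1_prime (ltn_ord i)) mulrnA; apply: (eqmodMn idI).
  rewrite -(subnSK (ltn_ord i)).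
  apply: (eqmod_trans idI (eqmodMr idI _ (comm_expS idI I3 _ _ _))).
  by rewrite mulrnAl -mulrA; apply: (eqmod_refl idI).
rewrite -(mul_binom_quot_diag q1_prime (ltn_ord i)) mulrnA; apply: (eqmodMn idI).
apply: (eqmod_trans idI (eqmodMl idI _ (comm_expS idI I3 _ _ _))).
rewrite mulrnAr; apply: (eqmodMn idI).
rewrite !mulrA; apply: (eqmodMr idI); apply: (eqmod_sym idI).
exact: (central_mod_comm I3).
Qed.

Lemma comm_frob_defect a b w : comm (frob_defect q a b) w ≡
  comm a w * ((a + b) ^+ q - a ^+ q) + comm b w * ((a + b) ^+ q - b ^+ q) mod I.
Proof.
apply: (eqmod_trans idI (comm_frob_defect_sum a b w)).
have Ia : I (comm a w * comm a b) by exact: (comm_mul_comm idI I3).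
have Ib : I (comm b w * comm a b).
  by rewrite (comm_antisym b a) mulrN; apply: (idealpN idI); exact: (comm_mul_comm idI I3).
apply: (eqmod_sym idI); rewrite !mulrBr.
apply: (eqmod_trans idI (eqmodD idI
  (eqmodB idI (mul_exprD_binom_mod idI q (central_mod_comm I3 a w) Ia) (eqmod_refl idI _))
  (eqmodB idI (mul_exprD_binom_mod idI q (central_mod_comm I3 b w) Ib) (eqmod_refl idI _)))).
rewrite -!mulrBr binom_sum_subl binom_sum_subr big_split /= !big_distrr /=.
by apply: (eqmod_eq idI); congr (_ + _); apply: eq_bigr => i _; rewrite mulrnAr.
Qed.

Lemma kappaR_addl a b w : kappaR q (a + b) w - (kappaR q a w + kappaR q b w)
  ≡ comm (frob_defect q a b * w ^+ q) w mod I.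
Proof.
have -> : kappaR q (a + b) w - (kappaR q a w + kappaR q b w)
    = (comm a w * ((a + b) ^+ q - a ^+ q) + comm b w * ((a + b) ^+ q - b ^+ q)) * w ^+ q.
  rewrite /kappaR commDl; move: (comm a w) (comm b w) => ca cb.
  by rewrite !mulrBr !mulrDl !mulNr opprD addrACA.
rewrite comm_mulr_expr; apply: (eqmodMr idI); apply: (eqmod_sym idI).
exact: comm_frob_defect.
Qed.

Lemma kappaR_addr a b w : kappaR q w (a + b) - (kappaR q w a + kappaR q w b)
  ≡ comm w (frob_defect q a b * w ^+ q) mod I.
Proof.
have anti := kappaR_antisym q.
apply: (eqmod_trans idI (eqmodB idI (anti _ _) (eqmodD idI (anti _ _) (anti _ _)))).
rewrite comm_antisym.
have -> : - kappaR q (a + b) w - (- kappaR q a w + - kappaR q b w)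
    = - (kappaR q (a + b) w - (kappaR q a w + kappaR q b w)) by rewrite !opprD !opprK.
exact: (eqmodN idI (kappaR_addl a b w)).
Qed.

End KappaMod.

Definition comm_mod (R : nzRingType) (I : R -> Prop) (x : R) :=
  exists y z, x ≡ comm y z mod I.

(* On k_1<X>, [kappa p] and [wm p] are [kappaR p.-1] and [wmR p.-1]. *)
Definition wmR (R : nzRingType) (n m : nat) (u : nat -> R) :=
  \prod_(r < m) kappaR n (u (2 * r).+1) (u (2 * r).+2).

Definition upd (R : Type) (u : nat -> R) (i : nat) (x : R) (j : nat) :=
  if j == i then x else u j.

Lemma prod_defect (R : nzRingType) (F F1 F2 : nat -> R) m r0 : (r0 < m)%N ->
    (forall r, r != r0 -> F1 r = F r) -> (forall r, r != r0 -> F2 r = F r) ->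
  \prod_(r < m) F1 r - (\prod_(r < m) F r + \prod_(r < m) F2 r)
  = \prod_(0 <= r < r0) F r * (F1 r0 - (F r0 + F2 r0)) * \prod_(r0.+1 <= r < m) F r.
Proof.
move=> lt_r0m F1F F2F.
have splitm (G : nat -> R) : \prod_(r < m) G r
    = \prod_(0 <= r < r0) G r * (G r0 * \prod_(r0.+1 <= r < m) G r).
  rewrite -(big_mkord xpredT) (@big_cat_nat _ _ _ r0 0 m) ?(ltnW lt_r0m) //=.
  by rewrite (big_ltn lt_r0m).
have outside (G : nat -> R) : (forall r, r != r0 -> G r = F r) ->
    \prod_(0 <= r < r0) G r = \prod_(0 <= r < r0) F r
    /\ \prod_(r0.+1 <= r < m) G r = \prod_(r0.+1 <= r < m) F r.
  by move=> GF; split; apply: eq_big_nat => r /andP[lo hi]; apply: GF; apply/eqP; lia.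
rewrite !splitm; have [-> ->] := outside F1 F1F; have [-> ->] := outside F2 F2F.
by rewrite mulrBr mulrDr mulrBl mulrDl !mulrA.
Qed.

Lemma index_slot m i : (1 <= i <= 2 * m)%N ->
  exists2 r, (r < m)%N & i = (2 * r).+1 \/ i = (2 * r).+2.
Proof. by move=> hi; exists (i.-1 %/ 2)%N; lia. Qed.

Section WmDefect.
Variables (R : nzRingType) (I : R -> Prop).
Hypotheses (idI : ideal_pred I) (I3 : forall x y z, I (comm (comm x y) z)).

Lemma comm_mod_sandwich P Q x : central_mod I P -> central_mod I Q ->
  comm_mod I x -> comm_mod I (P * x * Q).
Proof.
move=> CP CQ [y [z xE]]; exists (P * y * Q), z.
apply: (eqmod_trans idI (eqmodMr idI _ (eqmodMl idI _ xE))).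
exact: (eqmod_sym idI (comm_sandwich idI y z CP CQ)).
Qed.

Lemma wmR_defect q m (u : nat -> R) v i : prime q.+1 -> (1 <= i <= 2 * m)%N ->
  comm_mod I (wmR q m (upd u i (u i + v)) - (wmR q m u + wmR q m (upd u i v))).
Proof.
move=> q1_prime /index_slot[r0 lt_r0m slot].
pose F (w : nat -> R) r := kappaR q (w (2 * r).+1) (w (2 * r).+2).
have updF x r : r != r0 -> F (upd u i x) r = F u r.
  by move=> ne_rr0; rewrite /F /upd !ifN_eq //; apply/eqP; lia.
have wmF w : wmR q m w = \prod_(r < m) F w r by [].
rewrite !wmF (prod_defect lt_r0m (updF _) (updF _)).
have centralF (s : seq nat) : central_mod I (\prod_(r <- s) F u r).
  by apply: (central_mod_prod idI) => r; exact: (kappaR_central_mod idI I3).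
apply: comm_mod_sandwich; [exact: centralF | exact: centralF |].
rewrite /F /upd; case: slot => ->; rewrite eqxx ?(gtn_eqF (ltnSn _)) ?(ltn_eqF (ltnSn _)).
- by exists (frob_defect q (u (2 * r0).+1) v * u (2 * r0).+2 ^+ q), (u (2 * r0).+2);
    exact: (kappaR_addl idI I3 q1_prime).
- by exists (u (2 * r0).+1), (frob_defect q (u (2 * r0).+2) v * u (2 * r0).+1 ^+ q);
    exact: (kappaR_addr idI I3 q1_prime).
Qed.

End WmDefect.

Section FreeSubst.
Variable k : fieldType.
Local Notation A := (FreeAlg k).
Variable u : nat -> A.

Lemma malgC_comm (c : k) (g : A) : g * c%:MP = c%:MP * g.
Proof.
rewrite mul_malgC malgM_def fgmulgU malgZ_def /fgscale.
by apply: eq_bigr => w _; rewrite mulrC mulm1.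
Qed.

Definition subst_word (w : {fmonom nat}) : A := \prod_(j <- (w : seq nat)) u j.

Lemma subst_word_mmorphism : mmorphism subst_word.
Proof.
split; last by rewrite /subst_word fm1 big_nil.
by move=> w1 w2; rewrite /subst_word fmM big_cat.
Qed.

HB.instance Definition _ := isMultiplicative.Build _ _ subst_word subst_word_mmorphism.

Definition subst : A -> A := mmap (@malgC {fmonom nat} k) subst_word.

HB.instance Definition _ := GRing.Additive.copy subst subst.

Lemma subst_is_multiplicative : multiplicative subst.
Proof.
by apply: commr_mmap_is_multiplicative => c w w'; rewrite /GRing.comm /= malgC_comm.
Qed.

HB.instance Definition _ := GRing.isMultiplicative.Build A A subst subst_is_multiplicative.

Lemma subst_is_scalable : scalable subst.
Proof. by move=> c g; rewrite /subst mmapZ /= mul_malgC. Qed.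

HB.instance Definition _ := GRing.isScalable.Build k A A *:%R subst subst_is_scalable.

Lemma subst_xvar i : subst (xvar k i) = u i.
Proof. by rewrite /= /subst /xvar mmapU /= mul1r /subst_word fmU big_seq1. Qed.

End FreeSubst.

Section TIdeals.
Variable k : fieldType.
Local Notation A := (FreeAlg k).

Lemma T3_ideal_pred : ideal_pred (@T3 k).
Proof.
split=> [V [[[V0 _ _] _] _] _ // | x y Tx Ty V TV gV | x y Ty V TV gV | x y Tx V TV gV].
- have [[[_ VD VZ] _] _] := TV; rewrite -scaleN1r; apply: VD; first exact: Tx.
  by apply: VZ; exact: Ty.
- by have [_ Vid] := TV; have [] := Vid x y (Ty V TV gV).
- by have [_ Vid] := TV; have [] := Vid y x (Tx V TV gV).
Qed.

Lemma T3_comm3 x y z : @T3 k (comm (comm x y) z).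
Proof.
move=> V [[_ Vend] _] gV.
have := Vend (subst (nth 0 [:: 0; x; y; z]) : {lrmorphism A -> A}) _ (gV _ erefl).
by rewrite !comm_rmorph /= !subst_xvar.
Qed.

Lemma S2_comm x y : @S2 k (comm x y).
Proof.
move=> V [_ Vend] gV.
have := Vend (subst (nth 0 [:: 0; x; y]) : {lrmorphism A -> A}) _ (gV _ erefl).
by rewrite !comm_rmorph /= !subst_xvar.
Qed.

End TIdeals.

Unset Implicit Arguments.

Theorem corollary2p2 (k : fieldType) (p : nat) (p_prime : prime p)
  (charp : p \in [pchar k]) (p_gt2 : (2 < p)%N)
  (m : nat) (m_ge1 : (1 <= m)%N) (u : nat -> FreeAlg k) (v : FreeAlg k)
  (i : nat) (hi : (1 <= i <= 2 * m)%N) :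
  S2_plus_T3
    (wm p m (fun j => if j == i then u i + v else u j)
     - (wm p m u + wm p m (fun j => if j == i then v else u j))).
Proof.
have p1_prime : prime p.-1.+1 by rewrite prednK // prime_gt0.
have [y [z defect]] := wmR_defect (@T3_ideal_pred k) (@T3_comm3 k) u v p1_prime hi.
exists (comm y z); eexists; split; [exact: S2_comm | split; first exact: defect].
by rewrite [RHS]addrC subrK.
Qed.
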